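(* Let $\Omega\subset\mathbb{R}^d$ ($d\in\{2,3\}$) be a domain with a Cartesian (axis-aligned) mesh $\mathcal{T}_h$ of $\Omega$ into boxes, let $\mathcal{F}_h$ be the set of its interior and boundary faces, and let $V_h$ be the discontinuous finite element space of functions whose restriction to each cell $K\in\mathcal{T}_h$ lies in $\mathbb{Q}_k$ ($k\ge 1$). Let $a_h$ be the symmetric interior penalty bilinear form $$a_h(u,v)=\sum_{K\in\mathcal{T}_h}\int_K\nabla u\cdot\nabla v\,dx+\sum_{F\in\mathcal{F}_h}\int_F\Big(\gamma_F\,[\![u]\!]\cdot[\![v]\!]-\{\nabla u\}\cdot[\![v]\!]-[\![u]\!]\cdot\{\nabla v\}\Big)\,d\sigma,$$ with any penalty values $\gamma_F>0$. Let $P_j$ be a vertex patch, i.e. the union of the cells of $\mathcal{T}_h$ sharing a given mesh vertex, and define $$V_j=\{v\in V_h:\ v=0 \text{ on every cell not contained in } P_j,\ \text{and on each cell } K\subset P_j,\ v|_K=0 \text{ and } \partial_n (v|_K)=0 \text{ on } \partial K\cap\partial P_j\},$$ where $\partial_n$ is the derivative in the direction normal to the face. Then for all $u,w\in V_h$ with $u|_K=w|_K$ for every cell $K\subset P_j$, and for all $v\in V_j$, one has $a_h(u,v)=a_h(w,v)$. In other words, the residual $b-Au$ tested against $V_j$ depends only on the values of $u$ on the cells of the patch $P_j$.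
   Context: Jumps and averages: on an interior face $F$ shared by cells $K^+$ and $K^-$ with outward unit normals $n^+$, $n^-=-n^+$ and traces $u^\pm$, set $\{u\}=\tfrac12(u^++u^-)$, $\{\nabla u\}=\tfrac12(\nabla u^++\nabla u^-)$ and $[\![u]\!]=u^+n^++u^-n^-$. On a boundary face (on $\partial\Omega$) with interior trace $u$ and outward normal $n$, set $\{\nabla u\}=\nabla u$ and $[\![u]\!]=u\,n$. $\mathbb{Q}_k$ denotes tensor-product polynomials of degree at most $k$ in each coordinate. The matrix $A$ represents $a_h$ in a basis of $V_h$ and $b$ is a right-hand side vector. *)

From HB Require Import structures.
From mathcomp Require Import all_boot all_order all_algebra.
From mathcomp Require Import all_classical all_reals all_analysis.
Set Implicit Arguments. Unset Strict Implicit. Unset Printing Implicit Defensive.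
Import Order.TTheory GRing.Theory Num.Theory.
Import numFieldNormedType.Exports.
Local Open Scope classical_set_scope.
Local Open Scope ring_scope.

Section SIPG.
Variables (R : realType) (d : nat).

Definition pt := 'rV[R]_d.
Definition coord (x : pt) (i : 'I_d) : R := x ord0 i.
Definition evec (i : 'I_d) : pt := delta_mx ord0 i.
Definition setc (x : pt) (i : 'I_d) (t : R) : pt :=
  \row_j (if j == i then t else coord x j).
Definition dotp (a b : pt) : R := \sum_(j < d) a ord0 j * b ord0 j.

Definition bnd (A : set pt) : set pt := closure A `\` interior A.

Record cart_mesh := CartMesh {
  cell : finType;
  lo : cell -> 'I_d -> R;
  hi : cell -> 'I_d -> R;
  lo_lt_hi : forall K i, lo K i < hi K i;
  disj_int : forall K K' x, K != K' ->
     ~ ((forall i, lo K i < coord x i < hi K i) /\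
        (forall i, lo K' i < coord x i < hi K' i))
}.

Variable M : cart_mesh.

Definition in_cell (K : cell M) (x : pt) : Prop :=
  forall i, lo K i <= coord x i <= hi K i.
(* closure of Omega = union of the cells *)
Definition mesh_set : set pt := [set x | exists K, in_cell K x].
Definition Omega : set pt := interior mesh_set.

Definition Qk (k : nat) (p : pt -> R) : Prop :=
  exists c : {ffun 'I_d -> 'I_k.+1} -> R,
    forall x, p x = \sum_(a : {ffun 'I_d -> 'I_k.+1})
                      c a * \prod_(i < d) coord x i ^+ a i.

(* discrete functions: one local polynomial per cell; u K is the
   polynomial u|_K (extended polynomially to R^d) *)
Definition dgfun := cell M -> pt -> R.
Definition in_Vh (k : nat) (u : dgfun) : Prop := forall K, Qk k (u K).

Definition partial (i : 'I_d) (f : pt -> R) (x : pt) : R := 'D_(evec i) f x.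
Definition grad (f : pt -> R) (x : pt) : pt := \row_i partial i f x.

Fixpoint iint (l : seq 'I_d) (a b : 'I_d -> R) (f : pt -> R) (x : pt) : R :=
  match l with
  | [::] => f x
  | i :: l' => Rintegral lebesgue_measure `[a i, b i]
                 (fun t => iint l' a b f (setc x i t))
  end.

Definition int_box (a b : 'I_d -> R) (f : pt -> R) : R :=
  iint (enum 'I_d) a b f 0.
(* integral over the axis-aligned (d-1)-face {x_i = c} x prod_{j<>i}[a j, b j]
   w.r.t. the surface measure *)
Definition int_face (i : 'I_d) (c : R) (a b : 'I_d -> R) (f : pt -> R) : R :=
  iint [seq j <- enum 'I_d | j != i] a b f (setc 0 i c).

(* Interior faces: Kp and Km touch along the hyperplane x_i = hi Kp i = lo Km i
   and their facets overlap in a (d-1)-dimensional box. Then n^+ = e_i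
   (outward from Kp), n^- = -e_i. *)
Definition is_iface (Kp Km : cell M) (i : 'I_d) : bool :=
  (hi Kp i == lo Km i) &&
  [forall j, (j != i) ==> (Num.max (lo Kp j) (lo Km j) < Num.min (hi Kp j) (hi Km j))].
Definition flo (Kp Km : cell M) (j : 'I_d) : R := Num.max (lo Kp j) (lo Km j).
Definition fhi (Kp Km : cell M) (j : 'I_d) : R := Num.min (hi Kp j) (hi Km j).

Definition ijump (u : dgfun) (Kp Km : cell M) (i : 'I_d) (x : pt) : pt :=
  u Kp x *: evec i + u Km x *: (- evec i).
Definition iavg (u : dgfun) (Kp Km : cell M) (x : pt) : pt :=
  2^-1 *: (grad (u Kp) x + grad (u Km) x).

(* boundary facets: facet of K with normal direction i, on the upper side if
   s = true; outward normal n; the boundary face is (facet) \cap bnd Omega *)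
Definition bnormal (i : 'I_d) (s : bool) : pt := (if s then 1 else -1) *: evec i.
Definition blevel (K : cell M) (i : 'I_d) (s : bool) : R :=
  if s then hi K i else lo K i.

Definition a_h (gI : cell M -> cell M -> 'I_d -> R) (gB : cell M -> 'I_d -> bool -> R)
    (u v : dgfun) : R :=
  \sum_(K : cell M) int_box (lo K) (hi K) (fun x => dotp (grad (u K) x) (grad (v K) x))
  + \sum_(Kp : cell M) \sum_(Km : cell M) \sum_(i < d)
      (if is_iface Kp Km i then
         int_face i (hi Kp i) (flo Kp Km) (fhi Kp Km) (fun x =>
           gI Kp Km i * dotp (ijump u Kp Km i x) (ijump v Kp Km i x)
           - dotp (iavg u Kp Km x) (ijump v Kp Km i x)
           - dotp (ijump u Kp Km i x) (iavg v Kp Km x))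
       else 0)
  + \sum_(K : cell M) \sum_(i < d) \sum_(s : bool)
      int_face i (blevel K i s) (lo K) (hi K) (fun x =>
        \1_(bnd Omega) x *
        (gB K i s * dotp (u K x *: bnormal i s) (v K x *: bnormal i s)
         - dotp (grad (u K) x) (v K x *: bnormal i s)
         - dotp (u K x *: bnormal i s) (grad (v K) x))).

Definition is_vertex_of (K : cell M) (z : pt) : Prop :=
  forall i, coord z i = lo K i \/ coord z i = hi K i.
Definition mesh_vertex (z : pt) : Prop := exists K, is_vertex_of K z.
(* cells of the patch of z (the cells K with K \subset P_j) *)
Definition in_patch (z : pt) (K : cell M) : Prop := is_vertex_of K z.
Definition patch_set (z : pt) : set pt :=
  [set x | exists K, in_patch z K /\ in_cell K x].

Definition in_Vj (k : nat) (z : pt) (v : dgfun) : Prop :=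
  in_Vh k v /\
  (forall K, ~ in_patch z K -> forall x, in_cell K x -> v K x = 0) /\
  (forall K, in_patch z K -> forall x, in_cell K x -> bnd (patch_set z) x ->
     v K x = 0 /\
     (forall i, (coord x i = lo K i \/ coord x i = hi K i) ->
        partial i (v K) x = 0)).

End SIPG.

From Pilot Require Import Defs.
From HB Require Import structures.
From mathcomp Require Import all_boot all_order all_algebra.
From mathcomp Require Import all_classical all_reals all_analysis.
From mathcomp Require Import lra.
Import Order.TTheory GRing.Theory Num.Theory.
Import numFieldNormedType.Exports.
Local Open Scope classical_set_scope.
Local Open Scope ring_scope.

(* The test function v vanishes with its gradient on every cell outside the
   patch, so all terms of a_h(., v) living there are zero. On a face between
   a patch cell and an outside cell, the common points lie on the boundary of
   the patch, where v and its normal derivative vanish from the patch side;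
   hence the jump of v and the normal component of its average vanish and
   the terms involving u drop out. What remains involves only the traces of
   u and grad u on patch cells, and these agree for u and w because
   functions that coincide on a closed box have equal one-sided, hence
   equal, partial derivatives at every point of the box. *)

Set Implicit Arguments.
Unset Strict Implicit.
Unset Printing Implicit Defensive.

Section OneSided.
Variables (R : numFieldType) (V W : normedModType R).

Lemma derive_eq_within (F : set_system R) {FF : ProperFilter F}
    (f g : V -> W) (y v : V) : F `=>` 0^' ->
  derivable f y v -> derivable g y v -> f y = g y ->
  (\forall h \near F, f (h *: v + y) = g (h *: v + y)) ->
  'D_v f y = 'D_v g y.
Proof.
move=> F0 df dg fgy fgF.
pose quot (k : V -> W) h := h^-1 *: ((k \o shift y) (h *: v) - k y).
have quotF (k : V -> W) : derivable k y v -> quot k @ F --> 'D_v k y.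
  by move=> dk; apply: cvg_trans (cvg_app _ F0) _; exact: dk.
have quotgDf : quot g @ F --> 'D_v f y.
  apply: cvg_trans (quotF f df); apply: near_eq_cvg; apply: filterS fgF.
  by move=> h /= fgh; rewrite /quot /= fgh fgy.
exact: cvg_unique quotgDf (quotF g dg).
Qed.

Lemma at_right_dnbhs (a : R) : a^'+ `=>` a^'.
Proof.
move=> A; rewrite /dnbhs /at_right /within /=; apply: filterS => x Ax x0.
by apply: Ax; rewrite gt_eqF.
Qed.

Lemma at_left_dnbhs (a : R) : a^'- `=>` a^'.
Proof.
move=> A; rewrite /dnbhs /at_left /within /=; apply: filterS => x Ax x0.
by apply: Ax; rewrite lt_eqF.
Qed.
End OneSided.

Section Geometry.
Variables (R : realType) (d : nat).
Local Notation pt := (pt R d).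
Local Notation coord := (@Defs.coord R d).

Definition in_open_box (a b : 'I_d -> R) (x : pt) : Prop :=
  forall i, a i < coord x i < b i.

Lemma open_box_nbhs (a b : 'I_d -> R) (p : pt) :
  in_open_box a b p -> \forall x \near p, in_open_box a b x.
Proof.
move=> pab; apply: (@filter_forall _ _ (fun i x => a i < coord x i < b i) (nbhs p)).
move=> i; have /andP[ai ib] := pab i.
have coord_cont : {for p, continuous (fun x : pt => coord x i)}.
  by apply: differentiable_continuous; exact: differentiable_coord.
near=> x; apply/andP; split; near: x.
- exact: coord_cont (lt_nbhsr ai).
- exact: coord_cont (lt_nbhsl ib).
Unshelve. all: by end_near.
Qed.

Definition in_closed_box (a b : 'I_d -> R) (x : pt) : Prop :=
  forall i, a i <= coord x i <= b i.

Lemma toward_midpoint_in_open (lo hi y t : R) : lo < hi -> lo <= y <= hi ->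
  0 < t <= 1 -> lo < y + t * ((lo + hi) / 2 - y) < hi.
Proof.
move=> lohi /andP[ly yh] /andP[t0 t1].
have e1 : 0 <= (1 - t) * (y - lo) by apply: mulr_ge0; lra.
have e2 : 0 <= (1 - t) * (hi - y) by apply: mulr_ge0; lra.
have e3 : 0 < t * (hi - lo) by apply: mulr_gt0; lra.
apply/andP; split; nra.
Qed.

Lemma closed_box_closure (a b : 'I_d -> R) (y : pt) :
  (forall i, a i < b i) -> in_closed_box a b y -> closure (in_open_box a b) y.
Proof.
move=> ab yab B /= By.
pose c : pt := \row_i ((a i + b i) / 2).
have toy : (fun t : R => y + t *: (c - y)) @ 0^'+ --> y.
  apply: cvg_at_right_filter; rewrite -[X in _ --> X]addr0 -(scale0r (c - y)).
  by apply: cvgD; [exact: cvg_cst | apply: cvgZl; exact: cvg_id].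
have [t [/andP[t0 t1] Bt]] : exists t, 0 < t <= 1 /\ B (y + t *: (c - y)).
  have : \forall t \near 0^'+, (0 < t <= 1) /\ B (y + t *: (c - y)).
    near=> t; split; last by near: t; exact: toy.
    apply/andP; split; near: t; [exact: nbhs_right_gt | exact: nbhs_right_le].
  by move=> /(filter_ex (F := 0^'+)) [t Ht]; exists t.
exists (y + t *: (c - y)); split => // i.
rewrite /Defs.coord !mxE -/(coord y i).
by apply: toward_midpoint_in_open => //; rewrite t0.
Unshelve. all: by end_near.
Qed.

Lemma coord_shift (i j : 'I_d) (h : R) (y : pt) :
  coord (h *: evec R i + y) j = (if j == i then h else 0) + coord y j.
Proof. by rewrite /Defs.coord /evec !mxE eqxx; case: eqP; rewrite ?mulr1 ?mulr0. Qed.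

Lemma partial_eq_on_box (a b : 'I_d -> R) (f g : pt -> R) (i : 'I_d) (y : pt) :
  a i < b i -> differentiable f y -> differentiable g y -> in_closed_box a b y ->
  (forall x, in_closed_box a b x -> f x = g x) -> partial i f y = partial i g y.
Proof.
move=> abi df dg yab fg.
have fgy := fg y yab.
have fg_line h : a i <= h + coord y i <= b i ->
    f (h *: evec R i + y) = g (h *: evec R i + y).
  move=> hab; apply: fg => j; rewrite coord_shift.
  by case: eqP => [->|_] //; rewrite add0r; exact: yab.
have /andP[ay yb] := yab i.
have dfi : derivable f y (evec R i) by exact: diff_derivable.
have dgi : derivable g y (evec R i) by exact: diff_derivable.
(* Since a i < b i, the box contains a segment from y in direction e_i on at
   least one side of y, and the one-sided difference quotients agree there. *)
have [ybi|ybi] := ltP (coord y i) (b i).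
  apply: (derive_eq_within (@at_right_dnbhs _ 0) dfi dgi fgy); near=> h.
  have h0 : 0 < h by near: h; exact: nbhs_right_gt.
  have hb : h < b i - coord y i by near: h; apply: nbhs_right_lt; rewrite subr_gt0.
  by apply: fg_line; apply/andP; split; lra.
apply: (derive_eq_within (@at_left_dnbhs _ 0) dfi dgi fgy); near=> h.
have h0 : h < 0 by near: h; exact: nbhs_left_lt.
have ha : a i - coord y i < h by near: h; apply: nbhs_left_gt; rewrite subr_lt0; lra.
by apply: fg_line; apply/andP; split; lra.
Unshelve. all: by end_near.
Qed.

Lemma grad_eq_on_box (a b : 'I_d -> R) (f g : pt -> R) (y : pt) :
  (forall i, a i < b i) -> differentiable f y -> differentiable g y ->
  in_closed_box a b y -> (forall x, in_closed_box a b x -> f x = g x) ->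
  grad f y = grad g y.
Proof.
move=> ab df dg yab fg; apply/rowP => i; rewrite !mxE.
exact: partial_eq_on_box (ab i) df dg yab fg.
Qed.

Lemma differentiable_Qk (k : nat) (p : pt -> R) (x : pt) : Qk k p -> differentiable p x.
Proof.
move=> [c pE]; rewrite (funext pE) -fct_sumE; elim/big_ind: _ => //.
  by move=> f g df dg; apply: differentiableD.
move=> m _; have -> : (fun y : pt => c m * \prod_(i < d) coord y i ^+ m i) =
    cst (c m) * \prod_(i < d) (fun y : pt => coord y i) ^+ m i.
  apply/funext => y; rewrite /= fct_prodE; congr (_ * _).
  by apply: eq_bigr => i _; rewrite exprfctE.
apply: differentiableM; first exact: differentiable_cst.
elim/big_ind: _ => //.
  by move=> f g df dg; apply: differentiableM.
move=> i _; case: (nat_of_ord (m i)) => [|n]; first exact: differentiable_cst.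
by apply: differentiableX; exact: differentiable_coord.
Qed.

Lemma coord_setc (x : pt) (i j : 'I_d) (t : R) :
  coord (setc x i t) j = if j == i then t else coord x j.
Proof. by rewrite /Defs.coord /setc mxE. Qed.

Lemma eq_iint (l : seq 'I_d) (a b : 'I_d -> R) (f g : pt -> R) (x : pt) :
  (forall y, (forall j, j \in l -> a j <= coord y j <= b j) ->
     (forall j, j \notin l -> coord y j = coord x j) -> f y = g y) ->
  iint l a b f x = iint l a b g x.
Proof.
elim: l x => [|i l IH] x fg /=; first by apply: fg => // j; rewrite in_nil.
apply: eq_Rintegral => t; rewrite inE /= in_itv /= => /andP[ait tbi].
apply: IH => y yab yx; apply: fg => j.
  rewrite in_cons => /orP[/eqP->|jl]; last exact: yab.
  have [il|il] := boolP (i \in l); first exact: yab.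
  by rewrite yx // coord_setc eqxx ait tbi.
by rewrite in_cons negb_or => /andP[ji jl]; rewrite yx // coord_setc (negbTE ji).
Qed.

Lemma eq_int_box (a b : 'I_d -> R) (f g : pt -> R) :
  (forall y, in_closed_box a b y -> f y = g y) -> int_box a b f = int_box a b g.
Proof.
by move=> fg; apply: eq_iint => y yab _; apply: fg => j; apply: yab; rewrite mem_enum.
Qed.

Lemma eq_int_face (i : 'I_d) (c : R) (a b : 'I_d -> R) (f g : pt -> R) :
  (forall y, coord y i = c -> (forall j, j != i -> a j <= coord y j <= b j) ->
     f y = g y) ->
  int_face i c a b f = int_face i c a b g.
Proof.
move=> fg; apply: eq_iint => y yab yc; apply: fg.
  by have := yc i; rewrite mem_filter eqxx coord_setc eqxx; exact.
by move=> j ji; apply: yab; rewrite mem_filter ji mem_enum.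
Qed.

Lemma dotp0 (a : pt) : dotp a 0 = 0.
Proof. by rewrite /dotp big1 // => j _; rewrite mxE mulr0. Qed.

Lemma dotpZevec (s : R) (i : 'I_d) (b : pt) : dotp (s *: evec R i) b = s * b ord0 i.
Proof.
rewrite /dotp (bigD1 i) //= big1 ?addr0; first by rewrite !mxE !eqxx mulr1.
by move=> j ji; rewrite !mxE (negbTE ji) mulr0 mul0r.
Qed.
End Geometry.

Section Mesh.
Variables (R : realType) (d : nat) (M : cart_mesh R d).
Local Notation pt := (pt R d).
Local Notation coord := (@Defs.coord R d).

Lemma open_cell_disjoint (K K' : cell M) (p : pt) : K != K' ->
  in_open_box (lo K) (hi K) p -> ~ in_cell K' p.
Proof.
move=> KK' pK pK'.
have [x [xK' xK]] := closed_box_closure (lo_lt_hi K') pK' (open_box_nbhs pK).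
exact: disj_int KK' (conj xK xK').
Qed.

Lemma shared_point_bnd_patch (z : pt) (Kin Kout : cell M) (y : pt) :
  in_patch z Kin -> ~ in_patch z Kout -> in_cell Kin y -> in_cell Kout y ->
  bnd (patch_set M z) y.
Proof.
move=> pKin npKout yKin yKout; split; first by apply: subset_closure; exists Kin.
move=> /= yint; have [x [xKout [K [pK xK]]]] :=
  closed_box_closure (lo_lt_hi Kout) yKout yint.
have KoutK : Kout != K by apply: contra_notN npKout => /eqP->.
exact: open_cell_disjoint KoutK xKout xK.
Qed.

Lemma ijumpE (f : dgfun M) (Kp Km : cell M) (i : 'I_d) (x : pt) :
  ijump f Kp Km i x = (f Kp x - f Km x) *: evec R i.
Proof. by rewrite /ijump scalerBl scalerN. Qed.

Lemma iface_in_cells (Kp Km : cell M) (i : 'I_d) (y : pt) :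
  is_iface Kp Km i -> coord y i = hi Kp i ->
  (forall j, j != i -> flo Kp Km j <= coord y j <= fhi Kp Km j) ->
  in_cell Kp y /\ in_cell Km y.
Proof.
move=> /andP[/eqP hilo _] yi yj.
have yKpKm j : j != i ->
    (lo Kp j <= coord y j <= hi Kp j) && (lo Km j <= coord y j <= hi Km j).
  by move=> ji; move: (yj j ji); rewrite /flo /fhi ge_max le_min andbACA.
split => j; have [->|ji] := eqVneq j i.
- by rewrite yi lexx ltW ?lo_lt_hi.
- by case/andP: (yKpKm j ji).
- by rewrite yi hilo lexx ltW ?lo_lt_hi.
- by case/andP: (yKpKm j ji).
Qed.
End Mesh.

Section PatchLocality.
Variables (R : realType) (d : nat) (M : cart_mesh R d) (k : nat) (z : pt R d).
Variables (u w v : dgfun M).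
Local Notation coord := (@Defs.coord R d).
Hypotheses (uVh : in_Vh k u) (wVh : in_Vh k w) (vVj : in_Vj k z v).
Hypothesis u_eq_w : forall K, in_patch z K -> forall x, in_cell K x -> u K x = w K x.

Lemma patch_traces_eq (K : cell M) (y : pt R d) : in_patch z K -> in_cell K y ->
  u K y = w K y /\ grad (u K) y = grad (w K) y.
Proof.
move=> pK yK; split; first exact: u_eq_w.
by apply: grad_eq_on_box (lo_lt_hi K) _ _ yK (u_eq_w pK); apply: differentiable_Qk.
Qed.

Lemma outside_traces_vanish (K : cell M) (y : pt R d) : ~ in_patch z K -> in_cell K y ->
  v K y = 0 /\ grad (v K) y = 0.
Proof.
have [vVh [v0 _]] := vVj; move=> npK yK; split; first exact: v0.
rewrite (grad_eq_on_box (g := cst 0) (lo_lt_hi K) _ _ yK (v0 _ npK)); first last.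
- exact: differentiable_cst.
- exact: differentiable_Qk.
by apply/rowP => i; rewrite !mxE /partial derive_cst.
Qed.

Lemma cell_terms_patch_local (K : cell M) :
  int_box (lo K) (hi K) (fun x => dotp (grad (u K) x) (grad (v K) x)) =
  int_box (lo K) (hi K) (fun x => dotp (grad (w K) x) (grad (v K) x)).
Proof.
apply: eq_int_box => y yK; have [pK|npK] := pselect (in_patch z K).
  by have [_ ->] := patch_traces_eq pK yK.
by have [_ ->] := outside_traces_vanish npK yK; rewrite !dotp0.
Qed.

Lemma boundary_terms_patch_local (gB : cell M -> 'I_d -> bool -> R)
    (K : cell M) (i : 'I_d) (s : bool) :
  let integrand (u : dgfun M) x :=
    \1_(bnd (Omega M)) x *
    (gB K i s * dotp (u K x *: bnormal R i s) (v K x *: bnormal R i s)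
     - dotp (grad (u K) x) (v K x *: bnormal R i s)
     - dotp (u K x *: bnormal R i s) (grad (v K) x)) in
  int_face i (blevel K i s) (lo K) (hi K) (integrand u) =
  int_face i (blevel K i s) (lo K) (hi K) (integrand w).
Proof.
apply: eq_int_face => y yi yj.
have yK : in_cell K y.
  move=> j; have [->|ji] := eqVneq j i; last exact: yj.
  by rewrite yi /blevel; have := lo_lt_hi K i; case: s {yi} => lohi; rewrite lexx ltW.
have [pK|npK] := pselect (in_patch z K).
  by have [-> ->] := patch_traces_eq pK yK.
by have [-> ->] := outside_traces_vanish npK yK; rewrite scale0r !dotp0.
Qed.

(* A point shared by a patch cell and an outside cell lies on the boundary of
   the patch, where the definition of V_j kills the trace and the normal
   derivative of v from the patch side. *)
Lemma mixed_face_v_vanish (Kin Kout : cell M) (i : 'I_d) (y : pt R d) :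
  in_patch z Kin -> ~ in_patch z Kout -> in_cell Kin y -> in_cell Kout y ->
  coord y i = lo Kin i \/ coord y i = hi Kin i ->
  [/\ v Kin y = 0, v Kout y = 0 & partial i (v Kin) y + partial i (v Kout) y = 0].
Proof.
move=> pKin npKout yKin yKout yi; have [_ [_ vbnd]] := vVj.
have [vin dvin] := vbnd _ pKin _ yKin (shared_point_bnd_patch pKin npKout yKin yKout).
have [vout /rowP/(_ i)] := outside_traces_vanish npKout yKout.
by rewrite !mxE => ->; rewrite dvin // addr0.
Qed.

Lemma iface_terms_patch_local (gI : cell M -> cell M -> 'I_d -> R)
    (Kp Km : cell M) (i : 'I_d) :
  let integrand (u : dgfun M) x :=
    gI Kp Km i * dotp (ijump u Kp Km i x) (ijump v Kp Km i x)
    - dotp (Defs.iavg u Kp Km x) (ijump v Kp Km i x)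
    - dotp (ijump u Kp Km i x) (Defs.iavg v Kp Km x) in
  is_iface Kp Km i ->
  int_face i (hi Kp i) (flo Kp Km) (fhi Kp Km) (integrand u) =
  int_face i (hi Kp i) (flo Kp Km) (fhi Kp Km) (integrand w).
Proof.
move=> integrand face; apply: eq_int_face => y yi yj.
have [yKp yKm] := iface_in_cells face yi yj.
have [/eqP hilo _] := andP face.
rewrite /integrand /Defs.iavg !ijumpE; have [pKp|npKp] := pselect (in_patch z Kp);
  have [pKm|npKm] := pselect (in_patch z Km).
- by have [-> ->] := patch_traces_eq pKp yKp; have [-> ->] := patch_traces_eq pKm yKm.
- have [-> -> vavg] := mixed_face_v_vanish pKp npKm yKp yKm (or_intror yi).
  by rewrite subrr scale0r !dotp0 !dotpZevec !mxE vavg !mulr0.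
- have [-> -> vavg] := mixed_face_v_vanish pKm npKp yKm yKp (or_introl (etrans yi hilo)).
  by rewrite subrr scale0r !dotp0 !dotpZevec !mxE addrC vavg !mulr0.
have [-> ->] := outside_traces_vanish npKp yKp.
have [-> ->] := outside_traces_vanish npKm yKm.
by rewrite subrr scale0r addr0 scaler0 !dotp0.
Qed.
End PatchLocality.

Theorem mainTheorem1 (R : realType) (d : nat) (M : cart_mesh R d) (k : nat)
    (gI : cell M -> cell M -> 'I_d -> R) (gB : cell M -> 'I_d -> bool -> R)
    (z : pt R d) (u w v : dgfun M) :
  (d = 2%N \/ d = 3%N) ->
  (1 <= k)%N ->
  Omega M !=set0 -> connected (Omega M) ->
  (forall Kp Km i, 0 < gI Kp Km i) ->
  (forall K i s, 0 < gB K i s) ->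
  mesh_vertex M z ->
  in_Vh k u -> in_Vh k w ->
  (forall K, in_patch z K -> forall x, in_cell K x -> u K x = w K x) ->
  in_Vj k z v ->
  a_h gI gB u v = a_h gI gB w v.
Proof.
(* The identity holds term by term for any dimension, degree, penalties and
   point z, so only the membership hypotheses are used. *)
move=> _ _ _ _ _ _ _ uVh wVh u_eq_w vVj; rewrite /a_h; congr (_ + _ + _).
- apply: eq_bigr => K _.
  exact: cell_terms_patch_local uVh wVh vVj u_eq_w K.
- apply: eq_bigr => Kp _; apply: eq_bigr => Km _; apply: eq_bigr => i _.
  case: ifP => // face.
  exact (iface_terms_patch_local uVh wVh vVj u_eq_w gI face).
- apply: eq_bigr => K _; apply: eq_bigr => i _; apply: eq_bigr => s _.
  exact: boundary_terms_patch_local uVh wVh vVj u_eq_w gB K i s.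
Qed.
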